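(* Let $\mathcal S$ be a subfamily of a left-cancellative category $\mathcal C$ and let $(g_1,\dots,g_p)$ be an $\mathcal S$-greedy path in $\mathcal C$. Then for every $m$ with $1\le m\le p$, every $s\in\mathcal S^m$ and every $f\in\mathcal C$ such that $fg_1$ is defined, the relation $s\preccurlyeq fg_1\cdots g_p$ implies $s\preccurlyeq fg_1\cdots g_m$. In other words, the length-two path $(g_1\cdots g_m,\ g_{m+1}\cdots g_p)$ is $\mathcal S^m$-greedy.
   Context: A category is left-cancellative if $fg=fg'$ implies $g=g'$. For $f,g$ in $\mathcal C$, $f\preccurlyeq g$ ($f$ left-divides $g$) means $g=fg'$ for some $g'$. For $\mathcal S\subseteq\mathcal C$, $\mathcal S^m$ denotes the family of all products $s_1\cdots s_m$ of $m$ composable elements of $\mathcal S$. A length-two path $(g_1,g_2)$ (with $g_1g_2$ defined) is $\mathcal S$-greedy if for every $s\in\mathcal S$ and every $f\in\mathcal C$ with $fg_1$ defined, $s\preccurlyeq fg_1g_2$ implies $s\preccurlyeq fg_1$; a path $(g_1,\dots,g_p)$ is $\mathcal S$-greedy if each of its length-two subpaths $(g_i,g_{i+1})$ is $\mathcal S$-greedy. *)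

From mathcomp Require Import all_boot.
Set Implicit Arguments. Unset Strict Implicit. Unset Printing Implicit Defensive.

(* A (small) category presented by its family of morphisms: every morphism
   has a source and a target object; [mcomp f g] is the composite "f g"
   (first f, then g), meaningful when [tgt f = src g]. *)
Record category := Category {
  Ob : Type;
  Mor : Type;
  src : Mor -> Ob;
  tgt : Mor -> Ob;
  mcomp : Mor -> Mor -> Mor;
  idm : Ob -> Mor;
  src_idm : forall x, src (idm x) = x;
  tgt_idm : forall x, tgt (idm x) = x;
  src_mcomp : forall f g, tgt f = src g -> src (mcomp f g) = src f;
  tgt_mcomp : forall f g, tgt f = src g -> tgt (mcomp f g) = tgt g;
  mcomp_idl : forall f, mcomp (idm (src f)) f = f;
  mcomp_idr : forall f, mcomp f (idm (tgt f)) = f;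
  compA : forall f g h, tgt f = src g -> tgt g = src h ->
    mcomp (mcomp f g) h = mcomp f (mcomp g h)
}.

Section Defs.
Variable C : category.
Local Notation Mor := (Mor C).
Local Notation mcomp := (@mcomp C).

Definition left_cancellative : Prop :=
  forall f g g', tgt f = src g -> tgt f = src g' -> mcomp f g = mcomp f g' -> g = g'.

Definition ldiv (f g : Mor) : Prop :=
  exists g', tgt f = src g' /\ mcomp f g' = g.

Fixpoint composable (l : seq Mor) : Prop :=
  match l with
  | x :: ((y :: _) as l') => tgt x = src y /\ composable l'
  | _ => True
  end.

Fixpoint allS (S : Mor -> Prop) (l : seq Mor) : Prop :=
  match l with [::] => True | x :: l' => S x /\ allS S l' end.

(* s lies in S^m (m >= 1): s = s_1 ... s_m with composable s_i in S *)
Definition Spow (S : Mor -> Prop) (m : nat) (s : Mor) : Prop :=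
  exists (x : Mor) (l : seq Mor),
    size l = m.-1 /\ S x /\ allS S l /\
    composable (x :: l) /\ s = foldl mcomp x l.

Definition greedy2 (S : Mor -> Prop) (g1 g2 : Mor) : Prop :=
  tgt g1 = src g2 /\
  forall (s f : Mor), S s -> tgt f = src g1 ->
    ldiv s (mcomp (mcomp f g1) g2) -> ldiv s (mcomp f g1).

Fixpoint greedy_path (S : Mor -> Prop) (l : seq Mor) : Prop :=
  match l with
  | x :: ((y :: _) as l') => greedy2 S x y /\ greedy_path S l'
  | _ => True
  end.

End Defs.

From Pilot Require Import Defs.
From mathcomp Require Import all_boot.

Set Implicit Arguments.
Unset Strict Implicit.

(* Write s = x s' with x in S and s' in S^(m-1).
   Since x left-divides s, it left-divides f g_1 ... g_p, and greediness
   pushed down the path gives x <= f g_1, say f g_1 = x h.  Cancelling x in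
   x s' <= x h g_2 ... g_p gives s' <= h g_2 ... g_p, and the induction
   hypothesis for the greedy path (g_2, ..., g_p) and the prefix h yields
   s' <= h g_2 ... g_m; multiplying back by x gives s <= f g_1 ... g_m. *)

Section GreedyPaths.
Variable C : category.
Local Notation mc := (@mcomp C).

Lemma composable_mcompl (a x : Mor C) l :
  tgt a = src x -> composable (x :: l) -> composable (mc a x :: l).
Proof. by case: l => //= y l ax [xy Cl]; rewrite tgt_mcomp. Qed.

Lemma composable_take (x : Mor C) l n :
  composable (x :: l) -> composable (x :: take n l).
Proof.
elim: l x n => //= y l IHl x [|n] //= [xy Cl].
by split; last exact: IHl.
Qed.

Lemma greedy_path_composable S (l : seq (Mor C)) :
  greedy_path S l -> composable l.
Proof.
elim: l => // x l IHl; case: l IHl => //= y l IHl [[xy _] G].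
by split; last exact: IHl.
Qed.

Lemma src_foldl_mcomp (x : Mor C) l :
  composable (x :: l) -> src (foldl mc x l) = src x.
Proof.
elim: l x => //= y l IHl x [xy Cl].
by rewrite IHl ?src_mcomp //; apply: composable_mcompl.
Qed.

Lemma foldl_mcompA (a x : Mor C) l :
  tgt a = src x -> composable (x :: l) ->
  foldl mc (mc a x) l = mc a (foldl mc x l).
Proof.
elim: l a x => //= y l IHl a x ax [xy Cl].
rewrite Defs.compA // IHl ?src_mcomp //.
exact: composable_mcompl.
Qed.

Lemma ldiv_mcomp_l (x y a : Mor C) :
  tgt x = src y -> ldiv (mc x y) a -> ldiv x a.
Proof.
move=> xy [b [yb <-]]; rewrite tgt_mcomp // in yb.
by exists (mc y b); rewrite src_mcomp // Defs.compA.
Qed.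

Lemma greedy_path_ldiv_head S (g1 f s : Mor C) gs :
  greedy_path S (g1 :: gs) -> S s -> tgt f = src g1 ->
  ldiv s (foldl mc (mc f g1) gs) -> ldiv s (mc f g1).
Proof.
elim: gs g1 f => //= g2 gs IHgs g1 f [[g12 greedy12] G] Ss fg1 sd.
apply: greedy12 => //; apply: IHgs sd => //.
by rewrite tgt_mcomp.
Qed.

Hypothesis LC : left_cancellative C.

Lemma ldiv_mcomp2l (x y a : Mor C) :
  tgt x = src y -> tgt x = src a -> ldiv (mc x y) (mc x a) <-> ldiv y a.
Proof.
move=> xy xa; split => [[b [yb xyb]] | [b [yb <-]]].
  rewrite tgt_mcomp // in yb; exists b; split => //.
  by apply: (@LC x); rewrite ?src_mcomp // -Defs.compA.
by exists b; rewrite tgt_mcomp // Defs.compA.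
Qed.

Lemma greedy_path_ldiv_prefix S (g1 : Mor C) gs x l f :
  greedy_path S (g1 :: gs) -> allS S (x :: l) -> composable (x :: l) ->
  size l <= size gs -> tgt f = src g1 ->
  ldiv (foldl mc x l) (foldl mc (mc f g1) gs) ->
  ldiv (foldl mc x l) (foldl mc (mc f g1) (take (size l) gs)).
Proof.
elim: l x g1 gs f => [|y l IHl] x g1 gs f G [Sx Sl] Cl size_l fg1 sd /=.
  by rewrite take0; exact: greedy_path_ldiv_head G Sx fg1 sd.
case: gs G size_l sd => // g2 gs G size_l.
have [[g12 _] G2] : greedy2 S g1 g2 /\ greedy_path S (g2 :: gs) := G.
have [xy Cyl] : tgt x = src y /\ composable (y :: l) := Cl.
have xs' : tgt x = src (foldl mc y l) by rewrite src_foldl_mcomp.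
rewrite /= [foldl _ (mc x y) _]foldl_mcompA // => sd.
have [h [xh fg1_xh]] :=
  greedy_path_ldiv_head G Sx fg1 (ldiv_mcomp_l xs' sd).
have hg2 : tgt h = src g2 by rewrite -g12 -(tgt_mcomp fg1) -fg1_xh tgt_mcomp.
have prod_xh k : composable (g2 :: k) ->
    foldl mc (mc (mc f g1) g2) k = mc x (foldl mc (mc h g2) k)
    /\ tgt x = src (foldl mc (mc h g2) k).
  move=> Ck; have Chk := composable_mcompl hg2 Ck.
  rewrite -fg1_xh Defs.compA // foldl_mcompA ?src_mcomp //.
  by rewrite src_foldl_mcomp // src_mcomp.
have Cg := greedy_path_composable G2.
have [tail_eq xtail] := prod_xh _ Cg.
have [prefix_eq xprefix] := prod_xh _ (composable_take (size l) Cg).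
rewrite tail_eq in sd; rewrite prefix_eq.
apply/(ldiv_mcomp2l xs' xprefix)/(IHl _ _ _ _ G2 Sl Cyl size_l hg2).
exact/(ldiv_mcomp2l xs' xtail).
Qed.

End GreedyPaths.

Theorem mainTheorem2 (C : category) (S : Mor C -> Prop)
    (g1 : Mor C) (gs : seq (Mor C)) :
  left_cancellative C ->
  greedy_path S (g1 :: gs) ->
  forall m : nat, 1 <= m <= (size gs).+1 ->
  forall s : Mor C, Spow S m s ->
  forall f : Mor C, tgt f = src g1 ->
  ldiv s (foldl (@mcomp C) (mcomp f g1) gs) ->
  ldiv s (foldl (@mcomp C) (mcomp f g1) (take m.-1 gs)).
Proof.
move=> LC G m /andP[_ m_le] s [x [l [size_l [Sx [Sl [Cl ->]]]]]] f fg1.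
rewrite -size_l; apply: (greedy_path_ldiv_prefix LC G) => //.
by rewrite size_l -ltnS; case: m m_le {size_l}.
Qed.
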